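(* For $n\ge 1$, the subtree number indices of the polyphenylene ortho-chain $\overline{O}_n$, meta-chain $\overline{M}_n$ and para-chain $\overline{P}_n$ with $n$ hexagons are \[ \mathrm{STN}(\overline{O}_n)=\frac{49(16^{n}-1)}{25}+\frac{33n}{5},\quad \mathrm{STN}(\overline{M}_n)=\frac{49(13^{n}-1)}{16}-\frac{3n}{4},\quad \mathrm{STN}(\overline{P}_n)=\frac{441(12^{n}-1)}{121}-\frac{45n}{11}. \]
   Context: For a graph $G$, $\mathrm{STN}(G)$ is the number of nonempty subtrees of $G$ (subgraphs that are trees, single vertices included). A polyphenylene chain with $n$ hexagons consists of pairwise vertex-disjoint hexagons (6-cycles) $H_1,\dots,H_n$, where for each $i=1,\dots,n-1$ one vertex of $H_i$ is joined to one vertex of $H_{i+1}$ by a single cut edge, and there are no other edges. For $2\le i\le n-1$, $H_i$ has two distinct vertices incident to cut edges. The ortho-chain $\overline{O}_n$ (resp. meta-chain $\overline{M}_n$, para-chain $\overline{P}_n$) is the polyphenylene chain in which, for every $2\le i\le n-1$, these two vertices are at distance $1$ (resp. $2$, $3$) in $H_i$. *)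

From mathcomp Require Import all_boot all_order all_algebra.
Set Implicit Arguments. Unset Strict Implicit. Unset Printing Implicit Defensive.

Section Subtrees.
Variable V : finType.
Variable e : rel V. (* adjacency relation of a simple graph (symmetric, irreflexive) *)

Definition is_edge (f : {set V}) : bool :=
  [exists u, exists v, (u != v) && e u v && (f == [set u; v])].

Definition sub_adj (S : {set V}) (F : {set {set V}}) : rel V :=
  [rel u v | [&& u \in S, v \in S, u != v & [set u; v] \in F]].

Definition is_subgraph (S : {set V}) (F : {set {set V}}) : bool :=
  [forall f in F, is_edge f && (f \subset S)].

Definition sub_connected (S : {set V}) (F : {set {set V}}) : bool :=
  [forall u in S, forall v in S, connect (sub_adj S F) u v].

(* a cycle: a closed walk on k >= 3 pairwise distinct vertices; since the
   vertices are distinct, k <= #|V|, so we quantify over k-tuples, k <= #|V| *)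
Definition sub_acyclic (S : {set V}) (F : {set {set V}}) : bool :=
  [forall k : 'I_(#|V|.+1), forall c : k.-tuple V,
     (3 <= k) ==> ~~ ucycleb (sub_adj S F) c].

Definition is_subtree (S : {set V}) (F : {set {set V}}) : bool :=
  [&& S != set0, is_subgraph S F, sub_connected S F & sub_acyclic S F].

Definition STN : nat :=
  #| [set p : {set V} * {set {set V}} | is_subtree p.1 p.2 ] |.
End Subtrees.

(* Vertex k of 'I_(6*n) is vertex (k %% 6) of hexagon H_(k %/ 6) (0-based).
   Hexagon edges: positions a, a+1 mod 6.  Cut edge between H_i and H_(i+1):
   position d of H_i joined to position 0 of H_(i+1).  Hence for every inner
   hexagon the two cut vertices (positions 0 and d) are at distance d in it. *)
Definition chain_adj (d n : nat) : rel 'I_(6 * n) :=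
  [rel u v : 'I_(6 * n) |
    let i := (u %/ 6)%N in let j := (v %/ 6)%N in
    let a := (u %% 6)%N in let b := (v %% 6)%N in
    [|| (i == j) && ((a == (b + 1) %% 6) || (b == (a + 1) %% 6)),
        [&& j == i.+1, a == d & b == 0]
      | [&& i == j.+1, b == d & a == 0] ] ].

Definition ortho_chain_STN (n : nat) : nat := STN (@chain_adj 1 n).
Definition meta_chain_STN  (n : nat) : nat := STN (@chain_adj 2 n).
Definition para_chain_STN  (n : nat) : nat := STN (@chain_adj 3 n).

(* The edge joining H_m to H_(m+1) is a bridge, so a subtree of the chain either
   lies on one side of it or is a subtree of H_0..H_m through the exit vertex of
   H_m glued, along the bridge, to a subtree of H_(m+1) through its entry vertex.
   With s_m the number of subtrees of H_0..H_m and b_m the number of those through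
   the exit vertex of H_m, this gives
     s_(m+1) = s_m + 36 + 21 b_m,    b_(m+1) = 21 + c b_m,
   since a hexagon has 36 subtrees, 21 through a given vertex, and c = 16, 13, 12
   through two given vertices at distance 1, 2, 3 (counts checked by evaluation).
   Solving these linear recurrences gives the closed forms. *)

From mathcomp Require Import all_boot all_order all_algebra.
From mathcomp Require Import ring zify.
Set Implicit Arguments. Unset Strict Implicit. Unset Printing Implicit Defensive.

Section UniqCycles.
Variable T : finType.
Implicit Types (c : seq T) (r : rel T).

Lemma mem_iter_next c x i : x \in c -> iter i (next c) x \in c.
Proof. by move=> xc; elim: i => //= i IH; rewrite mem_next. Qed.

Lemma iter_next_connect c x y : uniq c -> x \in c -> y \in c ->
  exists i, y = iter i (next c) x.
Proof.
move=> Uc xc yc; have : fconnect (next c) x y by rewrite (fconnect_cycle (cycle_next Uc) xc).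
by rewrite fconnect_orbit => /trajectP[i _ ->]; exists i.
Qed.

Lemma next_next_size c x : uniq c -> x \in c -> next c (next c x) = x -> size c <= 2.
Proof.
move=> Uc xc nnx; apply: (uniq_leq_size (s2 := [:: x; next c x]) Uc).
move=> y /(iter_next_connect Uc xc)[i ->].
elim: i => [|i]; first by rewrite mem_head.
by rewrite iterS !inE => /orP[]/eqP->; rewrite ?nnx eqxx ?orbT.
Qed.

Lemma iter_exit (f : T -> T) (Q : pred T) x n : Q x -> ~~ Q (iter n f x) ->
  exists2 i, i < n & Q (iter i f x) && ~~ Q (iter i.+1 f x).
Proof.
move=> Qx; elim: n => [|n IH] /=; first by rewrite Qx.
case: (boolP (Q (iter n f x))) => [Qn nQ|nQn _]; first by exists n; rewrite ?Qn.
by case: (IH nQn) => i lt_in Hi; exists i; first exact: ltnW.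
Qed.

(* Leaving P and coming back would use the only crossing edge [u -> v] in both
   directions, so the cycle would be [u; v]. *)
Lemma cycle_one_side r (P : pred T) u v c :
  symmetric r -> uniq c -> cycle r c -> 2 < size c ->
  (forall a b, a \in c -> r a b -> P a -> ~~ P b -> a = u /\ b = v) ->
  {in c &, forall x y, P x -> P y}.
Proof.
move=> rsym Uc cc sz cross x y xc yc Px; apply/negPn/negP => nPy.
have [i yi] := iter_next_connect Uc xc yc.
have nPi : ~~ P (iter i (next c) x) by rewrite -yi.
have [j _ /andP[Pj nPj]] := iter_exit Px nPi.
have xj := mem_iter_next j xc.
have [uj vj] : iter j (next c) x = u /\ next c (iter j (next c) x) = v.
  exact: cross _ _ xj (next_cycle cc xj) Pj nPj.
have [i' xi'] := iter_next_connect Uc yc xc.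
have nPi' : ~~ predC P (iter i' (next c) y) by rewrite /= -xi' Px.
have [j' _ /andP[nPj' Pj']] := iter_exit (nPy : predC P y) nPi'.
rewrite /= negbK in Pj'.
have yj := mem_iter_next j' yc.
have [uj' vj'] : next c (iter j' (next c) y) = u /\ iter j' (next c) y = v.
  by apply: cross Pj' nPj'; rewrite ?mem_next // rsym; apply: next_cycle.
have uc : u \in c by rewrite -uj.
have : next c (next c u) = u by rewrite -{1}uj vj -vj' uj'.
by move/(next_next_size Uc uc); rewrite leqNgt sz.
Qed.

(* Both cycle neighbours of a vertex of maximal potential lie one level below
   it, hence coincide. *)
Lemma cycle_unit_potential r (pot : T -> nat) c :
  uniq c -> cycle r c -> 2 < size c -> {in c &, injective pot} ->
  (forall a b, a \in c -> r a b -> pot b = (pot a).+1 \/ pot a = (pot b).+1) -> False.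
Proof.
move=> Uc cc sz pot_inj step.
have [x0 x0c] : exists x0, x0 \in c.
  by case: c Uc cc sz {pot_inj step} => // a l; exists a; rewrite mem_head.
case: (@arg_maxnP _ x0 (mem c) pot x0c) => x xc xmax.
have nc : next c x \in c by rewrite mem_next.
have pc : prev c x \in c by rewrite mem_prev.
have := step _ _ xc (next_cycle cc xc); have := step _ _ pc (prev_cycle cc xc).
have := xmax _ nc; have := xmax _ pc => le_p le_n step_p step_n.
have /pot_inj : pot (next c x) = pot (prev c x) by lia.
move=> /(_ nc pc) next_prev_eq.
have := next_next_size Uc xc; rewrite next_prev_eq (next_prev Uc) => /(_ erefl).
by rewrite leqNgt sz.
Qed.
End UniqCycles.

Lemma homo_connect (T U : finType) (r : rel T) (r' : rel U) (f : T -> U) :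
  {homo f : x y / r x y >-> r' x y} -> {homo f : x y / connect r x y >-> connect r' x y}.
Proof.
move=> fr x y /connectP[p rp ->]; elim: p x rp => [|z p IH] x /=; first by rewrite connect0.
by case/andP=> rxz /IH; apply: connect_trans (connect1 (fr _ _ rxz)).
Qed.

Lemma eq_set2 (T : finType) (a b c d : T) : a != b -> [set a; b] = [set c; d] ->
  (a = c /\ b = d) \/ (a = d /\ b = c).
Proof.
move=> ab E; have : a \in [set c; d] by rewrite -E !inE eqxx.
have : b \in [set c; d] by rewrite -E !inE eqxx orbT.
rewrite !inE => /orP[]/eqP bE /orP[]/eqP aE; move: ab; rewrite aE bE ?eqxx // => _.
  by right.
by left.
Qed.

Lemma path_exit (T : eqType) (r : rel T) (P : pred T) x p :
  path r x p -> P x -> ~~ P (last x p) -> exists a b, [/\ r a b, P a & ~~ P b].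
Proof.
elim: p x => [|y p IH] x /=; first by move=> _ ->.
case/andP => rxy pp Px; case: (boolP (P y)) => Py; first exact: IH.
by move=> _; exists x, y.
Qed.

Lemma connect_dfs (T : finType) (g : T -> seq T) (r : rel T) n :
  #|T| <= n -> (forall x y, (y \in g x) = r x y) ->
  connect r =2 (fun x y => y \in dfs g n [::] x).
Proof.
move=> leTn gr x y.
have {}gr : grel g =2 r by exact: gr.
have := @dfs_pathP T g n x y [::]; rewrite card0 add0n => /(_ leTn isT) dP.
apply/connectP/dP => [[p rp ->]|[p gp -> _]].
  by exists p; rewrite ?(eq_path gr) // disjoint_sym disjoint0.
by exists p; rewrite -?(eq_path gr).
Qed.

Lemma card_count_full (T : finType) (s : seq T) (P : pred T) :
  uniq s -> size s = #|T| -> #|P| = count P s.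
Proof.
move=> Us sz; have /subset_cardP full : #|s| = #|T| by rewrite (card_uniqP Us).
have {}full : s =i T by apply/full/subset_predT.
rewrite cardE size_filter -enumT; suff /permP -> : perm_eq (enum T) s by [].
by apply: uniq_perm; rewrite ?enum_uniq // => x; rewrite mem_enum full.
Qed.

Lemma card_set (T : finType) : #|{set T}| = 2 ^ #|T|.
Proof.
by rewrite -cardsT -card_powerset; apply: eq_card => S; rewrite !inE subsetT.
Qed.

Fixpoint masks n : seq (seq bool) :=
  if n is n'.+1 then [seq b :: m | b <- [:: false; true], m <- masks n'] else [:: [::]].

Lemma size_masks n : size (masks n) = 2 ^ n.
Proof. by elim: n => // n IH; rewrite size_allpairs IH expnS. Qed.

Lemma mem_masks n m : (m \in masks n) = (size m == n).
Proof.
elim: n m => [|n IH] [|b m] //.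
  by apply/negbTE/allpairsP => -[[? ?] []].
rewrite -[size _ == _]/(size m == n) -IH.
apply/idP/idP => [/allpairsP[[? ?] [_ mm [_ ->]]] // | mm].
by apply/allpairsP; exists (b, m); case: b.
Qed.

Lemma masks_uniq n : uniq (masks n).
Proof.
elim: n => // n IH; apply: allpairs_uniq => // -[b1 m1] [b2 m2] _ _ /=.
by case=> -> ->.
Qed.

Section Subtrees.
Variable V : finType.
Variable e : rel V.
Hypothesis e_sym : symmetric e.
Implicit Types (S X Y W : {set V}) (F : {set {set V}}).

Definition subtrees X W : {set {set V} * {set {set V}}} :=
  [set p | [&& is_subtree e p.1 p.2, p.1 \subset X & W \subset p.1]].

Lemma STN_subtrees : STN e = #|subtrees [set: V] set0|.
Proof. by apply: eq_card => p; rewrite !inE subsetT sub0set !andbT. Qed.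

Lemma subtrees_eq0 X W : ~~ (W \subset X) -> subtrees X W = set0.
Proof.
move=> nWX; apply/setP => p; rewrite !inE; apply/and3P => -[_ sX WS].
by rewrite (subset_trans WS sX) in nWX.
Qed.

Lemma sub_adj_sym S F : symmetric (sub_adj S F).
Proof.
move=> a b; rewrite /sub_adj /= eq_sym [[set b; a]]setUC.
by case: (a \in S); case: (b \in S).
Qed.

Lemma sub_adj_mem S F a b : sub_adj S F a b -> (a \in S) && (b \in S).
Proof. by case/and4P => -> ->. Qed.

Lemma sub_adj_edge S F a b : is_subgraph e S F -> sub_adj S F a b -> e a b.
Proof.
move=> /forallP sg /and4P[_ _ ab abF].
have /andP[/existsP[x /existsP[y /andP[/andP[_ exy] /eqP E]]] _] := implyP (sg _) abF.
by case: (eq_set2 ab E) => [[-> ->]|[-> ->]] //; rewrite e_sym.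
Qed.

Lemma is_edge_mem f : is_edge e f -> exists a, a \in f.
Proof. by case/existsP => a /existsP[b /andP[_ /eqP->]]; exists a; rewrite !inE eqxx. Qed.

Lemma connect_restrict S F X w0 x y :
  (forall a b, sub_adj S F a b -> a \in X -> b \notin X -> a = w0) ->
  x \in X -> y \in X -> connect (sub_adj S F) x y ->
  connect (sub_adj (S :&: X) [set f in F | f \subset X]) x y.
Proof.
move=> exit xX yX /connectP[p pp Ey]; subst y.
set r' := sub_adj _ _.
suff H : forall z, path (sub_adj S F) z p -> (z \in X -> connect r' x z) ->
    (z \notin X -> connect r' x w0) -> last z p \in X -> connect r' x (last z p).
  by apply: H => // /negP.
elim: p {pp yX} => [|w p IH] z /=; first by move=> _ H1 _ /H1.
case/andP => rzw pw H1 H2; apply: IH => // [wX | wnX].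
- case: (boolP (z \in X)) => zX.
  + apply: connect_trans (H1 zX) (connect1 _).
    move: rzw; rewrite /r' /sub_adj /= !inE => /and4P[-> -> -> ->].
    by rewrite zX wX subUset !sub1set zX wX.
  + have wz : sub_adj S F w z by rewrite sub_adj_sym.
    by rewrite (exit _ _ wz wX zX); exact: H2.
- case: (boolP (z \in X)) => zX.
  + by rewrite -(exit _ _ rzw zX wnX); exact: H1.
  + exact: H2.
Qed.

Lemma subtree_restrict S F X w0 :
  is_subtree e S F -> w0 \in S -> w0 \in X ->
  (forall a b, sub_adj S F a b -> a \in X -> b \notin X -> a = w0) ->
  is_subtree e (S :&: X) [set f in F | f \subset X].
Proof.
move=> /and4P[_ sg cn ac] w0S w0X exit.
have sr : subrel (sub_adj (S :&: X) [set f in F | f \subset X]) (sub_adj S F).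
  move=> a b; rewrite /sub_adj /= !inE.
  by case/and4P => /andP[-> _] /andP[-> _] -> /andP[-> _].
apply/and4P; split.
- by apply/set0Pn; exists w0; rewrite inE w0S.
- apply/forallP => f; apply/implyP; rewrite inE => /andP[fF fX].
  have /andP[-> fS] := implyP (forallP sg f) fF.
  by rewrite subsetI fS.
- apply/forallP => x; apply/implyP; rewrite inE => /andP[xS xX].
  apply/forallP => y; apply/implyP; rewrite inE => /andP[yS yX].
  apply: (connect_restrict exit xX yX).
  exact: (implyP (forallP (implyP (forallP cn x) xS) y) yS).
- apply/forallP => k; apply/forallP => c; apply/implyP => k3.
  have := implyP (forallP (forallP ac k) c) k3; apply: contra.
  by case/andP => cy uc; rewrite /ucycleb uc (sub_cycle sr cy).
Qed.

Section Bridge.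
Variables (A B : {set V}) (u v : V).
Hypotheses (dAB : [disjoint A & B]) (uA : u \in A) (vB : v \in B) (euv : e u v)
  (bridge : forall a b, a \in A -> b \in B -> e a b -> a = u /\ b = v).

Lemma AB_excl x : x \in A -> x \in B -> False.
Proof. by move=> xA; rewrite (disjointFr dAB xA). Qed.

Lemma BA_excl x : x \in B -> x \in A -> False.
Proof. by move=> xB /AB_excl/(_ xB). Qed.

Lemma bridge_neq : u != v.
Proof. by apply/eqP => uv; apply: (AB_excl uA); rewrite uv. Qed.

Lemma bridge_notin_A : ~~ ([set u; v] \subset A).
Proof. by rewrite subUset !sub1set negb_and (disjointFl dAB vB) orbT. Qed.

Lemma bridge_notin_B : ~~ ([set u; v] \subset B).
Proof. by rewrite subUset !sub1set negb_and (disjointFr dAB uA). Qed.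

Definition join_bridge (q : ({set V} * {set {set V}}) * ({set V} * {set {set V}})) :=
  (q.1.1 :|: q.2.1, q.1.2 :|: q.2.2 :|: [set [set u; v]]).

Definition restrict X (p : {set V} * {set {set V}}) :=
  (p.1 :&: X, [set f in p.2 | f \subset X]).

Lemma join_bridgeC S1 F1 S2 F2 :
  join_bridge ((S1, F1), (S2, F2)) = join_bridge ((S2, F2), (S1, F1)).
Proof. by rewrite /join_bridge /= setUC [F1 :|: _]setUC. Qed.

Lemma sub_adj_join_in S1 F1 S2 F2 X Y a b :
  S1 \subset X -> S2 \subset Y -> (forall z, z \in X -> z \in Y -> False) ->
  is_subgraph e S2 F2 -> ~~ ([set u; v] \subset X) -> a \in X -> b \in X ->
  sub_adj (join_bridge ((S1, F1), (S2, F2))).1 (join_bridge ((S1, F1), (S2, F2))).2 a b ->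
  sub_adj S1 F1 a b.
Proof.
move=> s1 s2 dXY sg2 nuv aX bX /and4P[aS bS ab abF].
have nS2 z : z \in X -> z \notin S2 by move=> zX; apply/negP => /(subsetP s2)/(dXY z zX).
rewrite /sub_adj /= ab.
move: aS bS; rewrite !inE (negbTE (nS2 _ aX)) (negbTE (nS2 _ bX)) !orbF => -> -> /=.
move: abF; rewrite !inE => /orP[/orP[//|abF2]|/eqP E].
- have /andP[_ /subsetP sab] := implyP (forallP sg2 _) abF2.
  by have := nS2 _ aX; rewrite sab // !inE eqxx.
- by move: nuv; rewrite -E subUset !sub1set aX bX.
Qed.

Lemma join_bridge_subgraph S1 F1 S2 F2 :
  is_subgraph e S1 F1 -> u \in S1 -> is_subgraph e S2 F2 -> v \in S2 ->
  is_subgraph e (join_bridge ((S1, F1), (S2, F2))).1 (join_bridge ((S1, F1), (S2, F2))).2.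
Proof.
move=> sg1 uS sg2 vS.
apply/forallP => f; apply/implyP; rewrite !inE => /orP[/orP[fF|fF]|/eqP->].
- have /andP[-> fS] := implyP (forallP sg1 f) fF.
  exact: subset_trans fS (subsetUl _ _).
- have /andP[-> fS] := implyP (forallP sg2 f) fF.
  exact: subset_trans fS (subsetUr _ _).
- apply/andP; split; last by rewrite subUset !sub1set !inE uS vS orbT.
  by apply/existsP; exists u; apply/existsP; exists v; rewrite bridge_neq euv eqxx.
Qed.

Section Join.
Variables (S1 S2 : {set V}) (F1 F2 : {set {set V}}).
Hypotheses (t1 : is_subtree e S1 F1) (sA : S1 \subset A) (uS : u \in S1)
  (t2 : is_subtree e S2 F2) (sB : S2 \subset B) (vS : v \in S2).
Local Notation S := (join_bridge ((S1, F1), (S2, F2))).1.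
Local Notation F := (join_bridge ((S1, F1), (S2, F2))).2.

Lemma sub_adj_joinl : subrel (sub_adj S1 F1) (sub_adj S F).
Proof. by move=> a b /and4P[aS bS ab abF]; rewrite /sub_adj /= !inE aS bS ab abF. Qed.

Lemma sub_adj_joinr : subrel (sub_adj S2 F2) (sub_adj S F).
Proof. by move=> a b /and4P[aS bS ab abF]; rewrite /sub_adj /= !inE aS bS ab abF !orbT. Qed.

Lemma join_bridge_connected : sub_connected S F.
Proof.
move: t1 t2 => /and4P[_ _ cn1 _] /and4P[_ _ cn2 _].
have vu : sub_adj S F v u.
  by rewrite /sub_adj /= !inE uS vS eq_sym bridge_neq setUC eqxx !orbT.
have to_u x : x \in S -> connect (sub_adj S F) x u.
  rewrite inE => /orP[xS|xS].
  - apply: (homo_connect (f := id) sub_adj_joinl).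
    exact: (implyP (forallP (implyP (forallP cn1 x) xS) u) uS).
  - apply: (@connect_trans _ _ v x u); last exact: connect1 vu.
    apply: (homo_connect (f := id) sub_adj_joinr).
    exact: (implyP (forallP (implyP (forallP cn2 x) xS) v) vS).
apply/forallP => x; apply/implyP => xS; apply/forallP => y; apply/implyP => yS.
apply: connect_trans (to_u _ xS) _.
by rewrite (sym_connect_sym (@sub_adj_sym S F)); apply: to_u.
Qed.

(* A cycle cannot cross the bridge, so it lies in one of the two trees. *)
Lemma join_bridge_acyclic : sub_acyclic S F.
Proof.
move: t1 t2 => /and4P[_ sg1 _ ac1] /and4P[_ sg2 _ ac2].
have sg := join_bridge_subgraph sg1 uS sg2 vS.
apply/forallP => k; apply/forallP => c; apply/implyP => k3; apply/negP => /andP[cy uc].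
have szc : 2 < size c by rewrite size_tuple.
have cS x : x \in c -> x \in S.
  by move=> xc; have /andP[] := sub_adj_mem (next_cycle cy xc).
have cross a b : a \in c -> sub_adj S F a b -> a \in A -> b \notin A -> a = u /\ b = v.
  move=> _ rab aA bnA; apply: bridge => //; last exact: sub_adj_edge sg rab.
  have /andP[_] := sub_adj_mem rab; rewrite inE => /orP[/(subsetP sA)|/(subsetP sB)//].
  by rewrite (negbTE bnA).
have side := cycle_one_side (P := mem A) (@sub_adj_sym S F) uc cy szc cross.
have [x0 x0c] : exists x0, x0 \in c.
  by exists (nth u c 0); apply: mem_nth; apply: leq_ltn_trans szc.
case: (boolP (x0 \in A)) => x0A.
- have cA : all (mem A) c by apply/allP => y yc; exact: side x0 y x0c yc x0A.
  have := implyP (forallP (forallP ac1 k) c) k3; apply/negP/negPn.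
  rewrite /ucycleb uc andbT; apply: (sub_in_cycle _ cA cy) => a b aA bA.
  exact: (sub_adj_join_in sA sB AB_excl sg2 bridge_notin_A).
- have cB : all (mem B) c.
    apply/allP => y yc; case: (boolP (y \in A)) => yA.
      by have := side y x0 yc x0c yA; rewrite /= (negbTE x0A).
    by move: (cS _ yc); rewrite inE => /orP[/(subsetP sA)|/(subsetP sB)]; rewrite ?(negbTE yA).
  have := implyP (forallP (forallP ac2 k) c) k3; apply/negP/negPn.
  rewrite /ucycleb uc andbT; apply: (sub_in_cycle _ cB cy) => a b aB bB.
  rewrite join_bridgeC.
  exact: (sub_adj_join_in sB sA BA_excl sg1 bridge_notin_B).
Qed.

Lemma join_bridge_subtree : is_subtree e S F.
Proof.
move: t1 t2 => /and4P[_ sg1 _ _] /and4P[_ sg2 _ _].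
apply/and4P; split; last exact: join_bridge_acyclic; last exact: join_bridge_connected.
  by apply/set0Pn; exists u; rewrite inE uS.
exact: join_bridge_subgraph.
Qed.
End Join.

Lemma restrict_join S1 F1 S2 F2 X Y :
  S1 \subset X -> S2 \subset Y -> (forall z, z \in X -> z \in Y -> False) ->
  is_subgraph e S1 F1 -> is_subgraph e S2 F2 -> ~~ ([set u; v] \subset X) ->
  restrict X (join_bridge ((S1, F1), (S2, F2))) = (S1, F1).
Proof.
move=> s1 s2 dXY sg1 sg2 nuv; rewrite /restrict /join_bridge /=; congr (_, _).
  apply/setP => x; rewrite !inE; apply/idP/idP => [/andP[/orP[//|xS2] xX]|xS1].
    by case: (dXY x xX (subsetP s2 _ xS2)).
  by rewrite xS1 (subsetP s1 _ xS1).
apply/setP => f; rewrite !inE; apply/idP/idP => [|fF1]; last first.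
  have /andP[_ fS] := implyP (forallP sg1 f) fF1.
  by rewrite fF1 (subset_trans fS s1).
case/andP => /orP[/orP[//|fF2]|/eqP fuv] fX; last by rewrite -fuv fX in nuv.
have /andP[ef fS] := implyP (forallP sg2 f) fF2.
have [a af] := is_edge_mem ef.
by case: (dXY a (subsetP fX _ af) (subsetP s2 _ (subsetP fS _ af))).
Qed.

Lemma exit_A S F : is_subgraph e S F -> S \subset A :|: B ->
  forall a b, sub_adj S F a b -> a \in A -> b \notin A -> a = u.
Proof.
move=> sg sAB a b rab aA bnA.
have /andP[_ /(subsetP sAB)] := sub_adj_mem rab; rewrite inE (negbTE bnA) /= => bB.
by case: (bridge aA bB (sub_adj_edge sg rab)).
Qed.

Lemma exit_B S F : is_subgraph e S F -> S \subset A :|: B ->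
  forall a b, sub_adj S F a b -> a \in B -> b \notin B -> a = v.
Proof.
move=> sg sAB a b rab aB bnB.
have /andP[_ /(subsetP sAB)] := sub_adj_mem rab; rewrite inE (negbTE bnB) orbF => bA.
have eba : e b a by rewrite e_sym; exact: sub_adj_edge sg rab.
by case: (bridge bA aB eba).
Qed.

Lemma subtree_crossing S F :
  is_subtree e S F -> S \subset A :|: B -> ~~ (S \subset A) -> ~~ (S \subset B) ->
  [/\ u \in S, v \in S & [set u; v] \in F].
Proof.
move=> /and4P[_ sg cn _] sAB nSA nSB.
have [x xS xnB] := subsetPn nSB; have [y yS ynA] := subsetPn nSA.
have xA : x \in A by move: (subsetP sAB _ xS); rewrite inE (negbTE xnB) orbF.
have /connectP[p pp Ey] := implyP (forallP (implyP (forallP cn x) xS) y) yS.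
have ynA' : ~~ (mem A) (last x p) by rewrite /= -Ey.
have [a [b [rab aA bnA]]] := path_exit pp xA ynA'.
have bB : b \in B.
  have /andP[_ /(subsetP sAB)] := sub_adj_mem rab.
  by rewrite inE => /orP[bA|//]; case/negP: bnA.
have [au bv] := bridge aA bB (sub_adj_edge sg rab).
by move: rab; rewrite au bv => /and4P[-> -> _ ->].
Qed.

Lemma join_restrict S F : is_subgraph e S F -> S \subset A :|: B -> [set u; v] \in F ->
  join_bridge (restrict A (S, F), restrict B (S, F)) = (S, F).
Proof.
move=> sg sAB uvF; rewrite /join_bridge /restrict /=; congr (_, _).
  by rewrite -setIUr (setIidPl sAB).
apply/setP => f; rewrite !inE; apply/idP/idP.
  by case/orP => [/orP[/andP[-> _]|/andP[-> _]]|/eqP->].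
move=> fF; have /andP[/existsP[a /existsP[b /andP[/andP[_ eab] /eqP fE]]] fS] :=
  implyP (forallP sg f) fF.
have /(subsetP sAB) : a \in S by apply: (subsetP fS); rewrite fE !inE eqxx.
have /(subsetP sAB) : b \in S by apply: (subsetP fS); rewrite fE !inE eqxx orbT.
rewrite fF fE !inE /=.
case: (boolP (a \in A)) => aA; case: (boolP (b \in A)) => bA /= bB aB.
- by rewrite subUset !sub1set aA bA.
- by have [-> ->] := bridge aA bB eab; rewrite eqxx !orbT.
- rewrite e_sym in eab; have [-> ->] := bridge bA aB eab.
  by rewrite setUC eqxx !orbT.
- by rewrite [_ \subset B]subUset !sub1set aB bB !orbT.
Qed.

Lemma card_crossing_subtrees W : W \subset B ->
  #|[set p in subtrees (A :|: B) W | ~~ (p.1 \subset A) && ~~ (p.1 \subset B)]| =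
  #|subtrees A [set u]| * #|subtrees B (v |: W)|.
Proof.
move=> WB; rewrite -cardsX.
set D := setX _ _.
have restrictK q : q \in D -> (restrict A (join_bridge q), restrict B (join_bridge q)) = q.
  move: q => [[S1 F1] [S2 F2]]; rewrite !inE /= => /andP[/and3P[t1 sA _] /and3P[t2 sB _]].
  move: t1 t2 => /and4P[_ sg1 _ _] /and4P[_ sg2 _ _].
  rewrite (restrict_join sA sB AB_excl) ?bridge_notin_A // join_bridgeC.
  by rewrite (restrict_join sB sA BA_excl) ?bridge_notin_B.
rewrite -(card_in_imset (f := join_bridge)); last first.
  by move=> q1 q2 q1D q2D E; rewrite -(restrictK _ q1D) -(restrictK _ q2D) E.
apply: eq_card => -[S F]; rewrite !inE /=; apply/idP/imsetP.
- case/andP => /and3P[t sAB WS] /andP[nSA nSB].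
  have [uS vS uvF] := subtree_crossing t sAB nSA nSB.
  have /and4P[_ sg _ _] := t.
  exists (restrict A (S, F), restrict B (S, F)); last by rewrite join_restrict.
  rewrite !inE /= (subtree_restrict t uS uA (exit_A sg sAB)).
  rewrite (subtree_restrict t vS vB (exit_B sg sAB)).
  by rewrite !subsetIr /= !sub1set !inE uS uA subUset sub1set inE vS vB subsetI WS WB.
- case => -[[S1 F1] [S2 F2]]; rewrite !inE /= subUset !sub1set.
  case/andP => /and3P[t1 sA uS] /and3P[t2 sB /andP[vS WS]] [-> ->].
  rewrite join_bridge_subtree //= (setUSS sA sB) (subset_trans WS (subsetUr _ _)) /=.
  apply/andP; split; apply/negP => H.
  + by apply: (AB_excl (subsetP H v _) vB); rewrite inE vS orbT.
  + by apply: (AB_excl uA (subsetP H u _)); rewrite inE uS.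
Qed.

Lemma card_subtrees_bridge W : W \subset B ->
  #|subtrees (A :|: B) W| =
  #|subtrees A W| + #|subtrees B W| + #|subtrees A [set u]| * #|subtrees B (v |: W)|.
Proof.
move=> WB; rewrite -card_crossing_subtrees //.
set T := subtrees (A :|: B) W.
rewrite -(cardsID [set p : {set V} * {set {set V}} | p.1 \subset A] T).
rewrite -(cardsID [set p : {set V} * {set {set V}} | p.1 \subset B] (T :\: _)) addnA.
congr (_ + _ + _); apply: eq_card => -[S F]; rewrite !inE /=.
- case sA: (S \subset A); rewrite ?andbF ?andbT //=.
  by rewrite (subset_trans sA (subsetUl A B)).
- case sB: (S \subset B); rewrite ?andbF ?andbT //=.
  rewrite (subset_trans sB (subsetUr A B)).
  case t: (is_subtree e S F); rewrite ?andbF //=.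
  suff -> : ~~ (S \subset A) by [].
  apply/negP => sA; move: t => /and4P[/set0Pn[x xS] _ _ _].
  exact: AB_excl (subsetP sA _ xS) (subsetP sB _ xS).
- by case: (S \subset A); case: (S \subset B); case: (is_subtree e S F);
    case: (S \subset A :|: B); case: (W \subset S).
Qed.
End Bridge.
End Subtrees.

Definition hex_succ (i : 'I_6) : 'I_6 := ordS i.

Definition hex_vertices : seq 'I_6 := traject hex_succ ord0 6.

Lemma mem_hex_vertices i : i \in hex_vertices.
Proof. by case: i => -[|[|[|[|[|[|]]]]]]. Qed.

Lemma hex_succ_neq i : hex_succ i != i.
Proof. by case: i => -[|[|[|[|[|[|]]]]]]. Qed.

Lemma hex_succ2_neq i : hex_succ (hex_succ i) != i.
Proof. by case: i => -[|[|[|[|[|[|]]]]]]. Qed.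

Definition hex_pos (i0 i : 'I_6) : nat := (i + 5 - i0) %% 6.

Lemma hex_pos_inj i0 : injective (hex_pos i0).
Proof.
move=> i j; rewrite /hex_pos => E; apply: val_inj; move: E.
by case: i0 => -[|[|[|[|[|[|]]]]]] ?; case: i => -[|[|[|[|[|[|]]]]]] ?;
   case: j => -[|[|[|[|[|[|]]]]]].
Qed.

Lemma hex_pos_succ i0 i : i != i0 -> hex_pos i0 (hex_succ i) = (hex_pos i0 i).+1.
Proof. by case: i0 => -[|[|[|[|[|[|]]]]]] ?; case: i => -[|[|[|[|[|[|]]]]]]. Qed.

(* [s] and [f] select vertices and edges; edge [i] joins [i] and [hex_succ i]. *)
Definition hex_adj (s f : pred 'I_6) : rel 'I_6 :=
  [rel i j | [&& s i, s j & ((j == hex_succ i) && f i) || ((i == hex_succ j) && f j)]].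

Lemma hex_adj_sym s f : symmetric (hex_adj s f).
Proof. by move=> i j; rewrite /hex_adj /= orbC; case: (s i); case: (s j). Qed.

(* A connected subgraph of the hexagon is acyclic iff it misses an edge. *)
Definition hex_tree (s f : pred 'I_6) : bool :=
  [&& [exists i, s i], [forall i, f i ==> s i && s (hex_succ i)],
      [forall i, forall j, s i ==> s j ==> connect (hex_adj s f) i j] & [exists i, ~~ f i]].

Lemma eq_hex_tree s1 f1 s2 f2 : s1 =1 s2 -> f1 =1 f2 -> hex_tree s1 f1 = hex_tree s2 f2.
Proof.
move=> es ef; have ea : hex_adj s1 f1 =2 hex_adj s2 f2.
  by move=> i j; rewrite /hex_adj /= !es !ef.
rewrite /hex_tree; congr [&& _, _, _ & _].
- by apply: eq_existsb => i; rewrite es.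
- by apply: eq_forallb => i; rewrite es ef es.
- by apply: eq_forallb => i; apply: eq_forallb => j; rewrite !es (eq_connect ea).
- by apply: eq_existsb => i; rewrite ef.
Qed.

(* [hex_tree] with the finite quantifiers and [connect] replaced by an explicit
   vertex list and one depth-first search, so that it evaluates by [vm_compute]
   ([card], on which both are built, is locked). *)
Definition hex_connectedb (s f : pred 'I_6) : bool :=
  if [seq i <- hex_vertices | s i] is i0 :: _ then
    let reached := dfs (fun i => [seq j <- hex_vertices | hex_adj s f i j]) 6 [::] i0 in
    all (fun j => s j ==> (j \in reached)) hex_vertices
  else true.

Definition hex_treeb (s f : pred 'I_6) : bool :=
  [&& has s hex_vertices, all (fun i => f i ==> s i && s (hex_succ i)) hex_vertices,
      hex_connectedb s f & ~~ all f hex_vertices].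

Lemma hex_connectedbE s f :
  hex_connectedb s f = [forall i, forall j, s i ==> s j ==> connect (hex_adj s f) i j].
Proof.
have reachE i j : (j \in dfs (fun i => [seq j <- hex_vertices | hex_adj s f i j]) 6 [::] i) =
    connect (hex_adj s f) i j.
  apply/esym/connect_dfs => [|{}i {}j]; first by rewrite card_ord.
  by rewrite mem_filter mem_hex_vertices andbT.
rewrite /hex_connectedb; case E: [seq i <- hex_vertices | s i] => [|i0 l].
  apply/esym/forallP => i; apply/forallP => j.
  have : i \notin [seq i <- hex_vertices | s i] by rewrite E.
  by rewrite mem_filter mem_hex_vertices andbT => /negbTE->.
have : i0 \in [seq i <- hex_vertices | s i] by rewrite E mem_head.
rewrite mem_filter mem_hex_vertices andbT => si0.
apply/allP/forallP => [reach i|conn j _]; last first.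
  by rewrite reachE; apply: (implyP (forallP (conn i0) j) si0).
apply/forallP => j; apply/implyP => si; apply/implyP => sj.
apply: (@connect_trans _ _ i0).
  rewrite (sym_connect_sym (hex_adj_sym s f)) -reachE.
  exact: (implyP (reach i (mem_hex_vertices i)) si).
by rewrite -reachE; exact: (implyP (reach j (mem_hex_vertices j)) sj).
Qed.

Lemma hex_treebE s f : hex_treeb s f = hex_tree s f.
Proof.
rewrite /hex_treeb /hex_tree hex_connectedbE; congr [&& _, _, _ & _].
- by apply/hasP/existsP => [[i]|[i si]]; last exists i; rewrite ?mem_hex_vertices //; exists i.
- by apply/allP/forallP => [h i|h i _]; last exact: h; exact: h (mem_hex_vertices i).
- by apply/allPn/existsP => [[i _]|[i]]; [exists i | exists i; rewrite ?mem_hex_vertices].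
Qed.

Definition set_of_mask (m : seq bool) : {set 'I_6} := [set i : 'I_6 | nth false m i].

Lemma set_of_mask_inj : {in masks 6 &, injective set_of_mask}.
Proof.
move=> m1 m2; rewrite !mem_masks => /eqP sz1 /eqP sz2 /setP E.
apply: (@eq_from_nth _ false); rewrite ?sz1 ?sz2 // => i lt_i6.
by have := E (Ordinal lt_i6); rewrite !inE.
Qed.

Lemma card_hex_subgraphs (P : pred ({set 'I_6} * {set 'I_6})) :
  #|P| = count P [seq (set_of_mask a, set_of_mask b) | a <- masks 6, b <- masks 6].
Proof.
apply: card_count_full; last first.
  by rewrite size_allpairs size_masks card_prod card_set card_ord.
apply: allpairs_uniq; rewrite ?masks_uniq // => -[a1 b1] [a2 b2].
move=> /allpairsP[[? ?] [? ? [-> ->]]] /allpairsP[[? ?] [? ? [-> ->]]] [].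
by move=> /set_of_mask_inj -> // /set_of_mask_inj ->.
Qed.

Definition hex_count (W : {set 'I_6}) : nat :=
  #|[pred p : {set 'I_6} * {set 'I_6} | hex_tree [in p.1] [in p.2] && (W \subset p.1)]|.

Definition hex_countb (w : seq 'I_6) : nat :=
  count (fun ab => hex_treeb (nth false ab.1) (nth false ab.2) &&
                   all (fun i : 'I_6 => nth false ab.1 i) w)
    [seq (a, b) | a <- masks 6, b <- masks 6].

Lemma hex_countE (W : {set 'I_6}) (w : seq 'I_6) : W =i w -> hex_count W = hex_countb w.
Proof.
move=> Ww; rewrite /hex_count card_hex_subgraphs.
have -> : [seq (set_of_mask a, set_of_mask b) | a <- masks 6, b <- masks 6] =
    map (fun ab => (set_of_mask ab.1, set_of_mask ab.2))
      [seq (a, b) | a <- masks 6, b <- masks 6].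
  by rewrite map_allpairs.
rewrite count_map.
apply: eq_count => -[a b] /=.
rewrite hex_treebE (@eq_hex_tree _ _ (nth false a) (nth false b)).
  by congr (_ && _); apply/subsetP/allP => sub i; move: (sub i); rewrite Ww inE.
by move=> i; rewrite /= inE.
by move=> i; rewrite /= inE.
Qed.

Lemma hex_count0 : hex_count set0 = 36.
Proof. by rewrite (@hex_countE _ [::]) => [|i]; [vm_compute | rewrite inE]. Qed.

Lemma hex_count1 i : hex_count [set i] = 21.
Proof.
have /allP/(_ i (mem_hex_vertices i))/eqP <- :
    all (fun i => hex_countb [:: i] == 21) hex_vertices.
  by vm_compute.
by apply: hex_countE => j; rewrite !inE.
Qed.

Lemma hex_count2 i : hex_count [set ord0; i] = nth 0 [:: 21; 16; 13; 12; 13; 16] i.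
Proof.
have /allP/(_ i (mem_hex_vertices i))/eqP <- : all (fun i =>
    hex_countb [:: ord0; i] == nth 0 [:: 21; 16; 13; 12; 13; 16] i) hex_vertices.
  by vm_compute.
by apply: hex_countE => j; rewrite !inE.
Qed.

Section Chain.
Variables (d : 'I_6) (N : nat).
Hypothesis N_gt0 : 0 < N.
Local Notation V := 'I_(6 * N).
Local Notation e := (@chain_adj d N).

Lemma chain_adj_sym : symmetric e.
Proof.
move=> x y; rewrite /chain_adj /=.
set i := x %/ 6; set j := y %/ 6; set a := x %% 6; set b := y %% 6.
rewrite [j == i]eq_sym [(b == (a + 1) %% 6) || _]orbC.
by case: [&& j == i.+1, a == d & b == 0]; case: [&& i == j.+1, b == d & a == 0];
  rewrite ?orbT ?orbF.
Qed.

Fact chain_gt0 : 0 < 6 * N. Proof. lia. Qed.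

(* Out of range, [chain_vertex k] is the junk vertex 0. *)
Definition chain_vertex (k : nat) : V := insubd (Ordinal chain_gt0) k.

Lemma val_chain_vertex k : k < 6 * N -> val (chain_vertex k) = k.
Proof. by move=> lt_kN; rewrite val_insubd lt_kN. Qed.

Definition hex_vertex m (i : 'I_6) : V := chain_vertex (6 * m + i).
Definition hex_edge m (i : 'I_6) : {set V} := [set hex_vertex m i; hex_vertex m (hex_succ i)].
Definition hexagon m : {set V} := [set x : V | 6 * m <= x < 6 * m + 6].

Section Hexagon.
Variable m : nat.
Hypothesis m_lt : m < N.
Local Notation hv := (hex_vertex m).
Local Notation he := (hex_edge m).

Lemma val_hex_vertex i : hv i = 6 * m + i :> nat.
Proof. by rewrite val_chain_vertex //; have := ltn_ord i; lia. Qed.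

Definition hex_index (x : V) : 'I_6 := inord (x - 6 * m).

Lemma hex_vertexK : cancel hv hex_index.
Proof.
move=> i; apply: val_inj; rewrite /hex_index /= val_hex_vertex inordK; have := ltn_ord i; lia.
Qed.

Lemma hex_vertex_inj : injective hv.
Proof. exact: can_inj hex_vertexK. Qed.

Lemma hex_vertex_in i : hv i \in hexagon m.
Proof. by rewrite inE val_hex_vertex; have := ltn_ord i; lia. Qed.

Lemma hexagonP x : x \in hexagon m -> exists i, x = hv i.
Proof.
rewrite inE => hx; have lt_x6 : x - 6 * m < 6 by lia.
by exists (Ordinal lt_x6); apply: val_inj => /=; rewrite val_hex_vertex /=; lia.
Qed.

Lemma chain_adj_hex i j : e (hv i) (hv j) = (j == hex_succ i) || (i == hex_succ j).
Proof.
rewrite /chain_adj /= !val_hex_vertex.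
have q (k : 'I_6) : (6 * m + k) %/ 6 = m by have := ltn_ord k; lia.
have r (k : 'I_6) : (6 * m + k) %% 6 = k by have := ltn_ord k; lia.
rewrite !q !r eqxx (ltn_eqF (ltnSn m)) /= orbF.
by case: i => -[|[|[|[|[|[|]]]]]] ?; case: j => -[|[|[|[|[|[|]]]]]].
Qed.

Lemma hex_edge_inj : injective he.
Proof.
move=> i j E.
have neq : hv i != hv (hex_succ i) by rewrite (inj_eq hex_vertex_inj) eq_sym hex_succ_neq.
case: (eq_set2 neq E) => [[/hex_vertex_inj -> _]|[/hex_vertex_inj E1 /hex_vertex_inj E2]] //.
by have := hex_succ2_neq j; rewrite -E1 E2 eqxx.
Qed.

Lemma hex_edge_is_edge i : is_edge e (he i).
Proof.
apply/existsP; exists (hv i); apply/existsP; exists (hv (hex_succ i)).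
by rewrite (inj_eq hex_vertex_inj) eq_sym hex_succ_neq chain_adj_hex !eqxx.
Qed.

Section Transfer.
Variables S F : {set 'I_6}.
Local Notation SS := (hv @: S).
Local Notation FF := (he @: F).

Lemma hex_subgraphE :
  is_subgraph e SS FF = [forall i, (i \in F) ==> (i \in S) && (hex_succ i \in S)].
Proof.
apply/forallP/forallP => [sg i|sg f].
  apply/implyP => iF; have := implyP (sg (he i)) (imset_f _ iF).
  by rewrite subUset !sub1set !(mem_imset _ _ hex_vertex_inj) => /andP[_ /andP[-> ->]].
apply/implyP => /imsetP[i iF ->]; rewrite hex_edge_is_edge /= subUset !sub1set.
by rewrite !(mem_imset _ _ hex_vertex_inj); exact: (implyP (sg i) iF).
Qed.

Lemma sub_adj_hex i j : sub_adj SS FF (hv i) (hv j) = hex_adj [in S] [in F] i j.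
Proof.
rewrite /sub_adj /hex_adj /= !(mem_imset _ _ hex_vertex_inj) (inj_eq hex_vertex_inj).
case: (i \in S) => //; case: (j \in S) => //=.
case: (eqVneq i j) => [<-|ij] /=.
  by rewrite eq_sym (negbTE (hex_succ_neq i)).
have hvij : hv i != hv j by rewrite (inj_eq hex_vertex_inj).
apply/imsetP/orP => [[k kF E]|[/andP[/eqP-> iF]|/andP[/eqP-> jF]]].
- case: (eq_set2 hvij E) => [[/hex_vertex_inj-> /hex_vertex_inj->]
                            |[/hex_vertex_inj-> /hex_vertex_inj->]].
    by left; rewrite eqxx kF.
  by right; rewrite eqxx kF.
- by exists i.
- by exists j => //; rewrite /hex_edge setUC.
Qed.

Lemma hex_connectedE : sub_connected SS FF =
  [forall i, forall j, (i \in S) ==> (j \in S) ==> connect (hex_adj [in S] [in F]) i j].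
Proof.
apply/forallP/forallP => [cn i|cn x].
  apply/forallP => j; apply/implyP => iS; apply/implyP => jS.
  have := implyP (forallP (implyP (cn (hv i)) (imset_f _ iS)) (hv j)) (imset_f _ jS).
  rewrite -{2}(hex_vertexK i) -{2}(hex_vertexK j); apply: homo_connect => a b rab.
  have /andP[/imsetP[a' _ Ea] /imsetP[b' _ Eb]] := sub_adj_mem rab.
  by move: rab; rewrite Ea Eb !hex_vertexK sub_adj_hex.
apply/implyP => /imsetP[i iS ->]; apply/forallP => y; apply/implyP => /imsetP[j jS ->].
have := implyP (implyP (forallP (cn i) j) iS) jS.
by apply: homo_connect => a b; rewrite sub_adj_hex.
Qed.

(* Numbering the cycle vertices from the endpoint [hex_succ i0] of a missing
   edge [i0] gives a potential that changes by one along every edge. *)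
Lemma hex_acyclicE : is_subgraph e SS FF -> sub_acyclic SS FF = [exists i, i \notin F].
Proof.
move=> sg; case: (boolP [exists i, _]) => [/existsP[i0 i0F]|/existsPn Fall].
  apply/forallP => k; apply/forallP => c; apply/implyP => k3; apply/negP => /andP[cy uc].
  have szc : 2 < size c by rewrite size_tuple.
  have cS x : x \in c -> x \in SS by move=> xc; have /andP[] := sub_adj_mem (next_cycle cy xc).
  apply: (cycle_unit_potential (pot := fun x => hex_pos i0 (hex_index x)) uc cy szc).
    move=> x y /cS/imsetP[i _ ->] /cS/imsetP[j _ ->] /=.
    by rewrite !hex_vertexK => /hex_pos_inj ->.
  move=> a b ac rab; have /andP[/imsetP[i _ Ea] /imsetP[j _ Eb]] := sub_adj_mem rab.
  move: rab; rewrite Ea Eb sub_adj_hex !hex_vertexK /hex_adj /=.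
  case/and3P => _ _ /orP[/andP[/eqP-> iF]|/andP[/eqP-> jF]].
    by left; apply: hex_pos_succ; apply: contraNneq i0F => <-.
  by right; apply: hex_pos_succ; apply: contraNneq i0F => <-.
have {}Fall i : i \in F by have := Fall i; rewrite negbK.
have Sall i : i \in S.
  by move: sg; rewrite hex_subgraphE => /forallP/(_ i); rewrite Fall => /andP[].
have lt6 : 6 < #|V|.+1 by rewrite card_ord; lia.
have sz : size (map hv hex_vertices) == Ordinal lt6 by rewrite size_map.
apply/negbTE/negP => /forallP/(_ (Ordinal lt6))/forallP/(_ (Tuple sz)).
move=> /implyP/(_ isT)/negP; apply.
change (cycle (sub_adj SS FF) (map hv hex_vertices) && uniq (map hv hex_vertices)).
rewrite (map_inj_uniq hex_vertex_inj) andbT cycle_map.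
rewrite (eq_cycle (e' := fun i j => (j == hex_succ i) || (i == hex_succ j))) //.
by move=> i j /=; rewrite sub_adj_hex /hex_adj /= !Sall !Fall !andbT.
Qed.

Lemma is_subtree_hex : is_subtree e SS FF = hex_tree [in S] [in F].
Proof.
rewrite /is_subtree /hex_tree hex_connectedE.
have -> : (SS != set0) = [exists i, i \in S].
  by rewrite imset_eq0; apply/set0Pn/existsP => -[i]; exists i.
case sg: (is_subgraph e SS FF); first by rewrite (hex_acyclicE sg) -hex_subgraphE sg.
by rewrite -hex_subgraphE sg !andbF.
Qed.
End Transfer.

Lemma subtree_in_hexagon (S' : {set V}) (F' : {set {set V}}) :
  is_subgraph e S' F' -> S' \subset hexagon m ->
  exists (S F : {set 'I_6}), S' = hv @: S /\ F' = he @: F.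
Proof.
move=> sg sH; exists [set i : 'I_6 | hv i \in S'], [set i : 'I_6 | he i \in F']; split.
  apply/setP => x; apply/idP/imsetP => [xS|[i]]; last by rewrite inE => iS ->.
  by have [i xi] := hexagonP (subsetP sH _ xS); exists i; rewrite // inE -xi.
apply/setP => f; apply/idP/imsetP => [fF|[i]]; last by rewrite inE => iF ->.
have /andP[/existsP[a /existsP[b /andP[/andP[_ eab] /eqP fE]]] fS] := implyP (forallP sg f) fF.
have aH : a \in hexagon m by apply/(subsetP sH)/(subsetP fS); rewrite fE !inE eqxx.
have bH : b \in hexagon m by apply/(subsetP sH)/(subsetP fS); rewrite fE !inE eqxx orbT.
have [[i ai] [j bj]] := (hexagonP aH, hexagonP bH).
rewrite fE ai bj chain_adj_hex in fF eab *.
case/orP: eab => /eqP E; rewrite E in fF *; first by exists i; rewrite // inE.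
rewrite [[set _; _]]setUC in fF *.
by exists j; rewrite // inE.
Qed.

Lemma card_subtrees_hexagon (W : {set 'I_6}) :
  #|subtrees e (hexagon m) (hv @: W)| = hex_count W.
Proof.
pose embed (q : {set 'I_6} * {set 'I_6}) := (hv @: q.1, he @: q.2).
rewrite /hex_count -(card_imset _ (f := embed)); last first.
  by move=> [S1 F1] [S2 F2] [/(imset_inj hex_vertex_inj) -> /(imset_inj hex_edge_inj) ->].
apply: eq_card => -[S' F']; rewrite inE /=; apply/idP/imsetP.
  case/and3P => t sH WS; have /and4P[_ sg _ _] := t.
  have [S [F [ES EF]]] := subtree_in_hexagon sg sH.
  exists (S, F); last by rewrite /embed ES EF.
  rewrite inE /= -is_subtree_hex -ES -EF t /=.
  apply/subsetP => i iW; have := subsetP WS _ (imset_f hv iW).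
  by rewrite ES (mem_imset _ _ hex_vertex_inj).
case => -[S F] /andP[/= tSF WS] [-> ->].
rewrite is_subtree_hex tSF (imsetS _ WS) andbT /=.
by apply/subsetP => x /imsetP[i _ ->]; exact: hex_vertex_in.
Qed.

Lemma card_subtrees_hexagon0 : #|subtrees e (hexagon m) set0| = 36.
Proof. by rewrite -(imset0 hv) card_subtrees_hexagon hex_count0. Qed.

Lemma card_subtrees_hexagon1 i : #|subtrees e (hexagon m) [set hv i]| = 21.
Proof. by rewrite -imset_set1 card_subtrees_hexagon hex_count1. Qed.

Lemma card_subtrees_hexagon2 i :
  #|subtrees e (hexagon m) [set hv ord0; hv i]| = hex_count [set ord0; i].
Proof. by rewrite -(imset_set1 hv i) -imsetU1 card_subtrees_hexagon. Qed.
End Hexagon.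

Definition first_hexagons m : {set V} := [set x : V | x < 6 * m].

Lemma first_hexagons1 : first_hexagons 1 = hexagon 0.
Proof. by apply/setP => x; rewrite !inE; lia. Qed.

Lemma first_hexagonsN : first_hexagons N = [set: V].
Proof. by apply/setP => x; rewrite !inE ltn_ord. Qed.

Section Step.
Variable m : nat.
Hypothesis m_lt : m.+1 < N.
Local Notation A := (first_hexagons m.+1).
Local Notation B := (hexagon m.+1).
Local Notation u := (hex_vertex m d).
Local Notation v := (hex_vertex m.+1 ord0).

Lemma first_hexagonsS : A :|: B = first_hexagons m.+2.
Proof. by apply/setP => x; rewrite !inE; lia. Qed.

Lemma disjoint_first_hexagons : [disjoint A & B].
Proof. by rewrite disjoint_subset; apply/subsetP => x; rewrite !inE; lia. Qed.

Lemma cut_vertex_in : u \in A.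
Proof. by have := ltn_ord d; rewrite inE val_hex_vertex; lia. Qed.

Lemma entry_vertex_in : v \in B.
Proof. exact: hex_vertex_in. Qed.

Lemma chain_adj_cut : e u v.
Proof. by have := ltn_ord d; rewrite /chain_adj /= !val_hex_vertex //=; lia. Qed.

Lemma cut_edge_unique a b : a \in A -> b \in B -> e a b -> a = u /\ b = v.
Proof.
rewrite !inE => aA bB; rewrite /chain_adj /=.
case/or3P => [/andP[/eqP ab _]|/and3P[/eqP ab /eqP ad /eqP b0]|/and3P[/eqP ab _ _]]; try lia.
by split; apply: val_inj; rewrite /= val_hex_vertex //=; lia.
Qed.

Lemma card_subtrees_first_hexagonsS (W : {set V}) : W \subset B ->
  #|subtrees e (first_hexagons m.+2) W| =
  #|subtrees e A W| + #|subtrees e B W| + #|subtrees e A [set u]| * #|subtrees e B (v |: W)|.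
Proof.
move=> WB; rewrite -first_hexagonsS.
exact: (card_subtrees_bridge chain_adj_sym disjoint_first_hexagons
  cut_vertex_in entry_vertex_in chain_adj_cut cut_edge_unique WB).
Qed.
End Step.

Definition chain_subtrees m := #|subtrees e (first_hexagons m.+1) set0|.
Definition chain_subtrees_at_exit m :=
  #|subtrees e (first_hexagons m.+1) [set hex_vertex m d]|.

Lemma chain_subtrees0 : chain_subtrees 0 = 36 /\ chain_subtrees_at_exit 0 = 21.
Proof.
rewrite /chain_subtrees /chain_subtrees_at_exit first_hexagons1.
by rewrite card_subtrees_hexagon0 ?card_subtrees_hexagon1.
Qed.

Lemma chain_subtreesS m : m.+1 < N ->
  chain_subtrees m.+1 = chain_subtrees m + 36 + chain_subtrees_at_exit m * 21 /\
  chain_subtrees_at_exit m.+1 = 21 + chain_subtrees_at_exit m * hex_count [set ord0; d].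
Proof.
move=> m_lt; rewrite /chain_subtrees /chain_subtrees_at_exit.
have dB : [set hex_vertex m.+1 d] \subset hexagon m.+1 by rewrite sub1set hex_vertex_in.
rewrite !card_subtrees_first_hexagonsS ?sub0set // setU0.
rewrite (@subtrees_eq0 _ _ (first_hexagons m.+1) [set hex_vertex m.+1 d]); last first.
  by rewrite sub1set inE val_hex_vertex //; have := ltn_ord d; lia.
by rewrite card_subtrees_hexagon0 ?card_subtrees_hexagon1 ?card_subtrees_hexagon2 ?cards0.
Qed.

Lemma STN_chainE : STN e = chain_subtrees N.-1.
Proof. by rewrite STN_subtrees /chain_subtrees prednK // first_hexagonsN. Qed.
End Chain.

Import GRing.Theory Num.Theory.
Local Open Scope ring_scope.

Lemma chain_recurrence_solution (F : fieldType) (a p c : F) (s b : nat -> F) (n : nat) :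
  c != 1 -> s 0%N = a -> b 0%N = p ->
  (forall m, (m < n)%N -> s m.+1 = s m + a + b m * p /\ b m.+1 = p + b m * c) ->
  b n = p * (c ^+ n.+1 - 1) / (c - 1) /\
  s n = a * n.+1%:R + p ^+ 2 / (c - 1) * ((c ^+ n.+1 - c) / (c - 1) - n%:R).
Proof.
move=> c1 s0 b0; have c10 : c - 1 != 0 by rewrite subr_eq0.
elim: n => [_|n IH rec]; first by rewrite s0 b0; split; field.
have [bn sn] := IH (fun m lt_mn => rec m (ltnW lt_mn)).
have [sS bS] := rec n (ltnSn n).
by rewrite sS bS sn bn !exprS -[n.+2%:R]natr1 -[n.+1%:R]natr1; split; field.
Qed.

Lemma STN_chain (d : 'I_6) (n c : nat) : (0 < n)%N ->
  hex_count [set ord0; d] = c -> c != 1%N ->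
  (STN (@chain_adj d n))%:R = 36 * n%:R +
    441 / (c%:R - 1) * ((c%:R ^+ n - c%:R) / (c%:R - 1) - n%:R + 1) :> rat.
Proof.
case: n => // n n_gt0 hc c1; rewrite STN_chainE //=.
pose s m : rat := (chain_subtrees d n.+1 m)%:R.
pose b m : rat := (chain_subtrees_at_exit d n_gt0 m)%:R.
have c1' : c%:R != 1 :> rat by rewrite pnatr_eq1.
have [s0 b0] : s 0%N = 36 /\ b 0%N = 21.
  by rewrite /s /b (chain_subtrees0 d n_gt0).1 (chain_subtrees0 d n_gt0).2.
have rec m : (m < n)%N -> s m.+1 = s m + 36 + b m * 21 /\ b m.+1 = 21 + b m * c%:R.
  move=> lt_mn; rewrite /s /b; have [|-> ->] := chain_subtreesS d n_gt0 (m := m); first lia.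
  by rewrite hc !natrD !natrM.
have [_ sn] := chain_recurrence_solution c1' s0 b0 rec.
by rewrite -/(s n) sn -natr1; field; rewrite subr_eq0.
Qed.

Theorem corollary2 (n : nat) (hn : (1 <= n)%N) :
  [/\ (ortho_chain_STN n)%:R = 49%:R * (16%:R ^+ n - 1) / 25%:R + 33%:R * n%:R / 5%:R :> rat,
      (meta_chain_STN n)%:R = 49%:R * (13%:R ^+ n - 1) / 16%:R - 3%:R * n%:R / 4%:R :> rat
    & (para_chain_STN n)%:R = 441%:R * (12%:R ^+ n - 1) / 121%:R - 45%:R * n%:R / 11%:R :> rat].
Proof.
split.
- by rewrite /ortho_chain_STN (@STN_chain (@Ordinal 6 1 isT) n 16) ?hex_count2 //; field.
- by rewrite /meta_chain_STN (@STN_chain (@Ordinal 6 2 isT) n 13) ?hex_count2 //; field.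
- by rewrite /para_chain_STN (@STN_chain (@Ordinal 6 3 isT) n 12) ?hex_count2 //; field.
Qed.
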